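(* Let $r\in\{0,1\}$. If a vector $(x_\alpha,\dots,x_1)$ is $r$-realizable, then every vector $(y_\alpha,\dots,y_1)$ with $x_i\le y_i$ for all $1\le i\le\alpha$ is $r$-realizable.
   Context: All graphs are finite, nonempty, and reflexive (every vertex has a loop). $N[v]$ is the closed neighborhood of $v$ (including $v$). For distinct $v,w$, $w$ strictly corners $v$ if $N[v]\subsetneq N[w]$; $v$ is then a strict corner. A vertex dominates a set if adjacent to all its vertices. Corner ranking: set $G^{(1)}=G$, $k=1$. If $G^{(k)}$ is a clique, give all its vertices rank $k$ and stop. Else if $G^{(k)}$ has no strict corners, give all its vertices rank $\infty$ and stop. Else give every strict corner of $G^{(k)}$ rank $k$, delete them to get $G^{(k+1)}$ (induced subgraph), increase $k$ and repeat. The corner rank is the largest rank of a vertex; $X_k$ is the set of rank-$k$ vertices. A graph is cop-win iff its corner rank is finite. A graph of finite corner rank $\alpha\ge2$ is of type 1 if some (equivalently every) vertex of rank $\alpha$ dominates $V(G^{(\alpha-1)})$, and of type 0 otherwise. A vector is a finite list of positive integers. The rank cardinality vector is $(x_\alpha,\dots,x_1)$ with $x_k=|X_k|$. A vector is $r$-realizable if it is the rank cardinality vector of some cop-win graph of type $r$. *)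

From mathcomp Require Import all_boot.
Set Implicit Arguments. Unset Strict Implicit. Unset Printing Implicit Defensive.

Definition refl_graph (T : finType) (adj : rel T) : Prop :=
  (0 < #|T|) /\ reflexive adj /\ symmetric adj.

Section CornerRank.
Variables (T : finType) (adj : rel T).

Definition nbhd (S : {set T}) (v : T) : {set T} := [set w in S | adj v w].

Definition strict_corner (S : {set T}) (v : T) : bool :=
  (v \in S) && [exists w in S, (w != v) && (nbhd S v \proper nbhd S w)].

Definition corners (S : {set T}) : {set T} := [set v in S | strict_corner S v].

Definition is_clique (S : {set T}) : bool :=
  [forall v in S, forall w in S, adj v w].

Definition rank_step (S : {set T}) : {set T} :=
  if is_clique S then S else S :\: corners S.

(* stage k = vertex set of G^(k+1) *)
Definition stage (k : nat) : {set T} := iter k rank_step setT.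

(* G has finite corner rank alpha: G^(alpha) is the first clique *)
Definition corner_rank (alpha : nat) : Prop :=
  0 < alpha /\ is_clique (stage alpha.-1) /\
  (forall j, j < alpha.-1 -> ~~ is_clique (stage j)).

Definition Xrank (alpha k : nat) : {set T} :=
  if k == alpha then stage k.-1 else stage k.-1 :\: stage k.

(* type 1: some vertex of rank alpha dominates V(G^(alpha-1)) *)
Definition type1 (alpha : nat) : Prop :=
  exists2 v, v \in Xrank alpha alpha &
    forall u, u \in stage alpha.-2 -> adj v u.

Definition has_type (alpha r : nat) : Prop :=
  2 <= alpha /\ ((r = 1 /\ type1 alpha) \/ (r = 0 /\ ~ type1 alpha)).

Definition rank_card_vector (alpha : nat) : seq nat :=
  [seq #|Xrank alpha k| | k <- rev (iota 1 alpha)].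

End CornerRank.

(* a vector is r-realizable if it is the rank cardinality vector of some
   cop-win graph of type r *)
Definition realizable (r : nat) (x : seq nat) : Prop :=
  exists (T : finType) (adj : rel T) (alpha : nat),
    refl_graph adj /\ corner_rank adj alpha /\ has_type adj alpha r /\
    rank_card_vector adj alpha = x.

From mathcomp Require Import all_boot zify.
Set Implicit Arguments. Unset Strict Implicit. Unset Printing Implicit Defensive.

(* Adding a twin of a vertex v (a new vertex with the same closed
   neighbourhood) does not disturb the corner ranking: the twinned graph is the
   pullback of G along a surjection onto V(G), and strict corners, cliques, the
   stages G^(k) and domination are all reflected by such pullbacks, so the twin
   gets the rank of v while the corner rank and the type are unchanged.  Every
   rank class X_k (1 <= k <= alpha) is nonempty, so twinning one of its vertices
   increases x_k by one; iterating reaches every larger vector. *)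

Lemma strict_cornerE (T : finType) (adj : rel T) (S : {set T}) v :
  strict_corner adj S v =
  (v \in S) && [exists w in S, nbhd adj S v \proper nbhd adj S w].
Proof.
rewrite /strict_corner; congr (_ && _); apply: eq_existsb => w.
by case: eqVneq => [->|]; rewrite ?properxx ?andbF.
Qed.

Section Pullback.
Variables (T T' : finType) (adj : rel T) (f : T' -> T) (g : T -> T').
Hypothesis gK : cancel g f.
Local Notation adj' := (relpre f adj).

Lemma preimset_subset (A B : {set T}) :
  (f @^-1: A \subset f @^-1: B) = (A \subset B).
Proof.
apply/idP/idP => [/subsetP sAB|]; last exact: preimsetS.
by apply/subsetP => x xA; have := sAB (g x); rewrite !inE gK; apply.
Qed.

Lemma preimset_proper (A B : {set T}) :
  (f @^-1: A \proper f @^-1: B) = (A \proper B).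
Proof. by rewrite /proper !preimset_subset. Qed.

Lemma nbhd_relpre (S : {set T}) a :
  nbhd adj' (f @^-1: S) a = f @^-1: nbhd adj S (f a).
Proof. by apply/setP => b; rewrite !inE. Qed.

Lemma strict_corner_relpre (S : {set T}) a :
  strict_corner adj' (f @^-1: S) a = strict_corner adj S (f a).
Proof.
rewrite !strict_cornerE inE; congr (_ && _).
apply/existsP/existsP => -[w].
  by rewrite inE !nbhd_relpre preimset_proper; exists (f w).
by move=> wSp; exists (g w); rewrite inE !nbhd_relpre preimset_proper gK.
Qed.

Lemma corners_relpre (S : {set T}) :
  corners adj' (f @^-1: S) = f @^-1: corners adj S.
Proof. by apply/setP => a; rewrite !inE strict_corner_relpre. Qed.

Lemma is_clique_relpre (S : {set T}) :
  is_clique adj' (f @^-1: S) = is_clique adj S.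
Proof.
apply/forall_inP/forall_inP => cl v vS; apply/forall_inP => w wS.
  have := cl (g v); rewrite inE gK => /(_ vS) /forall_inP /(_ (g w)).
  by rewrite inE /= !gK; apply.
rewrite !inE in vS wS; by move/forall_inP: (cl _ vS) => /(_ _ wS).
Qed.

Lemma rank_step_relpre (S : {set T}) :
  rank_step adj' (f @^-1: S) = f @^-1: rank_step adj S.
Proof.
by rewrite /rank_step is_clique_relpre; case: ifP; rewrite // corners_relpre preimsetD.
Qed.

Lemma stage_relpre k : stage adj' k = f @^-1: stage adj k.
Proof.
elim: k => [|k IHk]; first by rewrite preimsetT.
by rewrite /stage !iterS -/(stage _ k) IHk rank_step_relpre.
Qed.

Lemma Xrank_relpre alpha k : Xrank adj' alpha k = f @^-1: Xrank adj alpha k.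
Proof. by rewrite /Xrank !stage_relpre; case: ifP; rewrite // preimsetD. Qed.

Lemma corner_rank_relpre alpha : corner_rank adj' alpha <-> corner_rank adj alpha.
Proof.
rewrite /corner_rank stage_relpre is_clique_relpre.
by split=> -[-> [-> ncl]]; do 2!split=> //; move=> j /ncl; rewrite stage_relpre is_clique_relpre.
Qed.

Lemma type1_relpre alpha : type1 adj' alpha <-> type1 adj alpha.
Proof.
split=> -[v]; rewrite ?Xrank_relpre ?inE => vX dom.
  exists (f v) => // u uS; rewrite -[u]gK.
  by apply: dom; rewrite stage_relpre inE gK.
exists (g v); first by rewrite Xrank_relpre inE gK.
by move=> u; rewrite stage_relpre inE /= gK; apply: dom.
Qed.

Lemma has_type_relpre alpha r : has_type adj' alpha r <-> has_type adj alpha r.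
Proof. by rewrite /has_type; have := type1_relpre alpha; tauto. Qed.

Lemma refl_graph_relpre : refl_graph adj -> refl_graph adj'.
Proof.
case=> /card_gt0P[v _] [adj_refl adj_sym]; split; last by split=> [a|a b] /=.
by apply/card_gt0P; exists (g v).
Qed.

End Pullback.

Lemma card_preimset_odflt (T : finType) (v : T) (X : {set T}) :
  #|odflt v @^-1: X| = (v \in X) + #|X|.
Proof.
rewrite (cardsD1 None) inE /=; congr (_ + _).
have -> : (odflt v @^-1: X) :\ None = Some @: X.
  apply/setP => -[x|]; rewrite !inE //=.
    by rewrite mem_imset //; move=> a b [].
  by apply/esym/imsetP; case.
by rewrite card_imset //; move=> a b [].
Qed.

Section Stages.
Variables (T : finType) (adj : rel T).

Lemma stageS k : stage adj k.+1 = rank_step adj (stage adj k).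
Proof. by []. Qed.

Lemma stage_subset j k : j <= k -> stage adj k \subset stage adj j.
Proof.
move/subnK <-; elim: (k - j) => // d IHd.
rewrite addSn stageS /rank_step; case: ifP => // _.
exact: subset_trans (subsetDl _ _) IHd.
Qed.

(* A vertex of S with a neighbourhood of maximal size is never a strict corner. *)
Lemma rank_step_neq0 (S : {set T}) : S != set0 -> rank_step adj S != set0.
Proof.
case/set0Pn=> v vS; rewrite /rank_step; case: ifP => _; first by apply/set0Pn; exists v.
have [m mS mmax] := arg_maxnP (fun u => #|nbhd adj S u|) vS.
have {}mS : m \in S := mS.
apply/set0Pn; exists m; rewrite !inE mS andbT strict_cornerE mS /=.
apply/existsP => -[w /andP[wS /proper_card]].
by have /= := mmax w wS; rewrite leqNgt => /negP.
Qed.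

Lemma stage_neq0 k : 0 < #|T| -> stage adj k != set0.
Proof.
case/card_gt0P=> v _; elim: k => [|k IHk]; last exact: rank_step_neq0.
by apply/set0Pn; exists v; rewrite inE.
Qed.

Lemma stage_stable k j : stage adj k.+1 = stage adj k -> k <= j ->
  stage adj j = stage adj k.
Proof.
move=> fix_k /subnKC <-; elim: (j - k) => [|d IHd]; first by rewrite addn0.
by rewrite addnS stageS IHd -stageS.
Qed.

Lemma Xrank_subset_stage alpha k : Xrank adj alpha k.+1 \subset stage adj k.
Proof. by rewrite /Xrank; case: ifP => _; rewrite ?subsetDl. Qed.

Lemma Xrank_neq0 alpha k : 0 < #|T| -> corner_rank adj alpha ->
  0 < k <= alpha -> Xrank adj alpha k != set0.
Proof.
move=> T_gt0 [_ [cl_alpha ncl]] /andP[k_gt0 le_k_alpha].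
rewrite /Xrank; case: ifP => [_|/negbT ne_k_alpha]; first exact: stage_neq0.
have lt_k : k.-1 < alpha.-1 by lia.
apply: contraNN (ncl _ lt_k); rewrite setD_eq0 => sub_k.
have fix_k : stage adj k.-1.+1 = stage adj k.-1.
  by apply/eqP; rewrite eqEsubset prednK // sub_k andbT stage_subset ?leq_pred.
by rewrite -(@stage_stable k.-1 alpha.-1) //; lia.
Qed.

Lemma mem_Xrank alpha j k v : 0 < j <= alpha -> 0 < k <= alpha ->
  v \in Xrank adj alpha k -> (v \in Xrank adj alpha j) = (j == k).
Proof.
case: j k => [|j] [|k] //= le_j_alpha le_k_alpha vXk.
case: ltngtP => [lt_jk|lt_kj|-> //]; apply/negbTE.
  have vSk := subsetP (Xrank_subset_stage _ _) v vXk.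
  have vSj := subsetP (@stage_subset j.+1 k lt_jk) v vSk.
  by rewrite /Xrank ifN_eq ?inE ?vSj //; lia.
move: vXk; rewrite /Xrank ifN_eq ?inE; last by lia.
case/andP=> vNSk _; apply: contra vNSk => vXj.
exact: subsetP (@stage_subset k.+1 j lt_kj) v (subsetP (Xrank_subset_stage _ _) v vXj).
Qed.

Lemma size_rank_card_vector alpha : size (rank_card_vector adj alpha) = alpha.
Proof. by rewrite size_map size_rev size_iota. Qed.

Lemma nth_rank_card_vector alpha i : i < alpha ->
  nth 0 (rank_card_vector adj alpha) i = #|Xrank adj alpha (alpha - i)|.
Proof.
move=> lt_i_alpha; rewrite (nth_map 0) ?size_rev ?size_iota //.
by rewrite nth_rev ?size_iota // nth_iota; [congr #|Xrank _ _ _|; lia | lia].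
Qed.

End Stages.

Lemma realizable_incr_nth r x i :
  realizable r x -> i < size x -> realizable r (incr_nth x i).
Proof.
case=> T [adj [alpha [G [CR [HT <-]]]]]; rewrite size_rank_card_vector => lt_i_alpha.
have T_gt0 : 0 < #|T| by case: G.
have rank_i : 0 < alpha - i <= alpha by lia.
have /set0Pn[v vX] := Xrank_neq0 T_gt0 CR rank_i.
(* [None] is the twin of [v]. *)
have SomeK : cancel Some (odflt v) by [].
exists (option T), (relpre (odflt v) adj), alpha; split; last split; last split.
- exact: refl_graph_relpre (odflt v) Some G.
- exact/(corner_rank_relpre adj SomeK).
- exact/(has_type_relpre adj SomeK).
apply: (@eq_from_nth _ 0) => [|j]; rewrite ?size_incr_nth !size_rank_card_vector ?lt_i_alpha //.
move=> lt_j_alpha; rewrite nth_incr_nth !nth_rank_card_vector //.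
rewrite (Xrank_relpre adj SomeK) card_preimset_odflt (mem_Xrank _ rank_i vX); last by lia.
by congr (nat_of_bool _ + _); apply/eqP/eqP; lia.
Qed.

Lemma incr_nth_closed_le (P : seq nat -> Prop) :
  (forall x i, P x -> i < size x -> P (incr_nth x i)) ->
  forall x y, size y = size x -> (forall i, i < size x -> nth 0 x i <= nth 0 y i) ->
  P x -> P y.
Proof.
move=> P_incr x y; move gap: (\sum_(i < size y) (nth 0 y i - nth 0 x i)) => n.
elim: n x gap => [|n IHn] x gap sz_y le_xy Px.
  suff -> : y = x by [].
  apply: (@eq_from_nth _ 0) => // i lt_i_y; move: gap.
  rewrite (bigD1 (Ordinal lt_i_y)) //= => /eqP; rewrite addn_eq0 => /andP[/eqP].
  by have := le_xy i; rewrite -sz_y => /(_ lt_i_y); lia.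
have [i lt_xy_i] : exists i : 'I_(size y), nth 0 x i < nth 0 y i.
  apply/existsP; apply: contra_eqT gap; rewrite negb_exists => /forallP le_yx.
  by rewrite big1 // => j _; apply/eqP; rewrite subn_eq0 leqNgt le_yx.
have lt_i_x : i < size x by rewrite -sz_y.
have sz_incr : size (incr_nth x i) = size x by rewrite size_incr_nth lt_i_x.
apply: (IHn (incr_nth x i)); rewrite ?sz_incr //.
- rewrite (bigD1 i) //= in gap; rewrite (bigD1 i) //= nth_incr_nth eqxx.
  rewrite (eq_bigr (fun j : 'I_(size y) => nth 0 y j - nth 0 x j)); first by lia.
  by move=> j ne_ji; rewrite nth_incr_nth -[_ == _]/(i == j) eq_sym (negbTE ne_ji).
- move=> j lt_j_x; rewrite nth_incr_nth.
  by case: eqVneq => [<-|_]; [exact: lt_xy_i | exact: le_xy].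
- exact: P_incr.
Qed.

Theorem lemma3p6 (r : nat) (x y : seq nat) :
  r <= 1 ->
  realizable r x ->
  size y = size x ->
  (forall i, i < size x -> nth 0 x i <= nth 0 y i) ->
  realizable r y.
Proof.
move=> _ real_x sz_y le_xy.
exact: (incr_nth_closed_le (@realizable_incr_nth r) sz_y le_xy real_x).
Qed.
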